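(* Let $M\in\mathrm{rep}\,G_{m,n}$ be arbitrary and $\ast\in\{ss,cc,tot\}$. Then $$\sum_{I\in\mathbb{I}_{m,n}}\tilde d^\ast_M(I)\cdot\underline{\dim}(V_I)=\underline{\dim}(M),$$ where $\underline{\dim}(X)=(\dim X(v))_{v}$ is the dimension vector indexed by the vertices $v$ of $G_{m,n}$.
   Context: Fix a field $K$. For integers $m,n\ge1$, $G_{m,n}$ is the equioriented commutative $m\times n$ grid: the quiver with vertex set $\{(i,j):1\le i\le m,\ 1\le j\le n\}$ and arrows $(i,j)\to(i,j+1)$ and $(i,j)\to(i+1,j)$, bound by all commutativity relations; $\mathrm{rep}\,G_{m,n}$ is its category of finite-dimensional representations over $K$ satisfying the relations. An interval of $G_{m,n}$ is a nonempty full subquiver $I$ which is connected (as an undirected graph) and convex (whenever $x,y\in I_0$ and there are paths $x\to z$, $z\to y$ in $G_{m,n}$, then $z\in I_0$); $\mathbb{I}_{m,n}$ is the set of intervals ordered by inclusion of vertex sets. The interval representation $V_I$ has $K$ at vertices of $I$, $0$ elsewhere, identity maps on arrows inside $I$ and zero maps otherwise. Essential vertices: $I^{ss}_0$ is the set of sources and sinks of the quiver $I$; $I^{cc}_0=I_0\cap(\mathrm{pr}_1(I^{ss}_0)\times\mathrm{pr}_2(I^{ss}_0))$ with $\mathrm{pr}_1,\mathrm{pr}_2$ coordinate projections; $I^{tot}_0=I_0$. Let $KG_{m,n}$ be the $K$-linear category whose objects are the vertices and whose morphisms are $K$-linear combinations of paths modulo the commutativity relations; representations are $K$-linear functors $KG_{m,n}\to\mathrm{vect}_K$.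 For $\ast\in\{ss,cc,tot\}$, $\mathcal{C}^\ast_I$ is the full subcategory of $KG_{m,n}$ on $I^\ast_0$, and $M^\ast_I:=M|_{\mathcal{C}^\ast_I}$. The compressed multiplicity $\bar d^\ast_M(I)$ is the multiplicity of the indecomposable $(V_I)^\ast_I$ as a direct summand of $M^\ast_I$. Let $\mu$ be the Möbius function of the finite poset $\mathbb{I}_{m,n}$ ($\mu([I,I])=1$, $\mu([I,J])=-\sum_{I\le L<J}\mu([I,L])$ for $I<J$), and $\tilde d^\ast_M(I):=\sum_{J\ge I}\mu([I,J])\,\bar d^\ast_M(J)$. *)

From HB Require Import structures.
From mathcomp Require Import all_boot all_order all_algebra.
From Stdlib Require Import ClassicalEpsilon.
Set Implicit Arguments. Unset Strict Implicit. Unset Printing Implicit Defensive.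
Import GRing.Theory.
Local Open Scope ring_scope.

Definition pbool (P : Prop) : bool :=
  if excluded_middle_informative P then true else false.

Definition gvert (m n : nat) := ('I_m * 'I_n)%type.

Definition garr m n (x y : gvert m n) : bool :=
  ((nat_of_ord x.1 == y.1) && ((x.2 : nat).+1 == y.2)) ||
  ((nat_of_ord x.2 == y.2) && ((x.1 : nat).+1 == y.1)).

(* There is a path x -> y in G_{m,n} iff x <= y componentwise. *)
Definition gle m n (x y : gvert m n) : bool :=
  ((x.1 <= y.1)%N && (x.2 <= y.2)%N).

(* M(x) = K^(rdim x)
   as row vectors; rmap x y is the image of the (unique up to the relations)
   path class x -> y when gle x y, a (rdim x) x (rdim y) matrix acting on the
   right; Hom(x,y) = 0 otherwise, so rmap x y = 0 then. *)
Record rep (K : fieldType) (m n : nat) := Rep {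
  rdim : gvert m n -> nat;
  rmap : forall x y : gvert m n, 'M[K]_(rdim x, rdim y);
  rmap_id : forall x, rmap x x = 1%:M;
  rmap_comp : forall x y z, gle x y -> gle y z ->
     rmap x z = rmap x y *m rmap y z;
  rmap_zero : forall x y, ~~ gle x y -> rmap x y = 0
}.

Definition gadj m n (I : {set gvert m n}) : rel (gvert m n) :=
  fun x y => [&& x \in I, y \in I & garr x y || garr y x].

Definition is_interval m n (I : {set gvert m n}) : bool :=
  [&& I != set0,
      [forall x in I, forall y in I, connect (gadj I) x y] &
      [forall x in I, forall y in I, forall z,
          (gle x z && gle z y) ==> (z \in I)]].

Definition VI_map (K : fieldType) m n (I : {set gvert m n}) (x y : gvert m n)
  : 'M[K]_((x \in I) : nat, (y \in I) : nat) :=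
  if gle x y then const_mx 1 else 0.

Definition VI_dim m n (I : {set gvert m n}) (x : gvert m n) : nat := (x \in I).

Lemma gle_trans m n (x y z : gvert m n) : gle x y -> gle y z -> gle x z.
Proof.
by rewrite /gle => /andP[a b] /andP[c d]; rewrite (leq_trans a c) (leq_trans b d).
Qed.

Inductive ess_kind := ess_ss | ess_cc | ess_tot.

Definition ss_vert m n (I : {set gvert m n}) : {set gvert m n} :=
  [set x in I | [forall y, garr y x ==> (y \notin I)]
             || [forall y, garr x y ==> (y \notin I)]].

Definition cc_vert m n (I : {set gvert m n}) : {set gvert m n} :=
  [set x in I | [exists a in ss_vert I, nat_of_ord a.1 == x.1]
             && [exists b in ss_vert I, nat_of_ord b.2 == x.2]].

Definition ess_vert (e : ess_kind) m n (I : {set gvert m n}) : {set gvert m n} :=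
  match e with
  | ess_ss => ss_vert I
  | ess_cc => cc_vert I
  | ess_tot => I
  end.

(* Restriction to the full subcategory on a vertex set S: morphisms of the
   restricted representations are families of matrices at vertices of S,
   natural w.r.t. all x <= y with x, y in S.  "N^k is a direct summand of
   X|_S": there are morphisms f_i : N -> X, g_i : X -> N (i < k) on S with
   g_j o f_i = delta_ij id_N. *)
Definition summand_pow (K : fieldType) m n (S : {set gvert m n})
  (dN : gvert m n -> nat) (phiN : forall x y, 'M[K]_(dN x, dN y))
  (dX : gvert m n -> nat) (phiX : forall x y, 'M[K]_(dX x, dX y)) (k : nat)
  : Prop :=
  exists (f : 'I_k -> forall x, 'M[K]_(dN x, dX x))
         (g : 'I_k -> forall x, 'M[K]_(dX x, dN x)),
    [/\ (forall i x y, x \in S -> y \in S -> gle x y ->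
            phiN x y *m f i y = f i x *m phiX x y),
        (forall i x y, x \in S -> y \in S -> gle x y ->
            phiX x y *m g i y = g i x *m phiN x y) &
        (forall i j x, x \in S ->
            f i x *m g j x = if i == j then 1%:M else 0)].

(* Multiplicity of N|_S as a direct summand of X|_S: the largest k with
   (N|_S)^k a direct summand of X|_S (the bound sum_x dX x + 1 is never
   reached when N|_S is nonzero). *)
Definition mult_summand (K : fieldType) m n (S : {set gvert m n})
  (dN : gvert m n -> nat) (phiN : forall x y, 'M[K]_(dN x, dN y))
  (dX : gvert m n -> nat) (phiX : forall x y, 'M[K]_(dX x, dX y)) : nat :=
  \max_(k < (\sum_(x : gvert m n) dX x).+1
         | pbool (summand_pow S phiN phiX k)) k.

Definition dbar (K : fieldType) m n (e : ess_kind) (M : rep K m n)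
  (I : {set gvert m n}) : nat :=
  mult_summand (ess_vert e I) (VI_map K I) (rmap M).

(* Recursion with fuel #|J| (enough since #|L| < #|J|). *)
Fixpoint mob_aux m n (k : nat) (I J : {set gvert m n}) : int :=
  if I == J then 1 else
  match k with
  | 0 => 0
  | k'.+1 =>
      if I \subset J then
        - \sum_(L : {set gvert m n} | [&& is_interval L, I \subset L & L \proper J])
             mob_aux k' I L
      else 0
  end.

Definition mobius m n (I J : {set gvert m n}) : int := mob_aux #|J| I J.

Definition dtilde (K : fieldType) m n (e : ess_kind) (M : rep K m n)
  (I : {set gvert m n}) : int :=
  \sum_(J : {set gvert m n} | is_interval J && (I \subset J))
     mobius I J * (dbar e M J)%:Z.

(* The compressed multiplicities dtilde are, by definition, the Möbius
   inversion of dbar over the poset of intervals.  Inverting back, the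
   multiplicities dtilde(I) of the intervals I containing a given vertex v add
   up to dbar({v}), and on the one-vertex interval {v} every kind of essential
   vertex set is {v} itself, so dbar({v}) is the multiplicity of the simple
   representation K in M(v), namely dim M(v). *)
From HB Require Import structures.
From mathcomp Require Import all_boot all_order all_algebra.
From mathcomp Require Import zify.
From Stdlib Require Import ClassicalEpsilon.
Import GRing.Theory.
Local Open Scope ring_scope.
Set Implicit Arguments. Unset Strict Implicit.

Section IntervalMobius.

Variables m n : nat.
Implicit Types I J L S : {set gvert m n}.

Lemma mob_aux_fuel I J k k' :
  (#|J| <= k)%N -> (#|J| <= k')%N -> mob_aux k I J = mob_aux k' I J.
Proof.
elim: k k' J => [|k IHk] [|k'] J hk hk' //=.
- case: eqP => // neqIJ; move: hk; rewrite leqn0 => /eqP/cards0_eq J0; subst J.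
  by rewrite subset0 (introF eqP neqIJ).
- case: eqP => // neqIJ; move: hk'; rewrite leqn0 => /eqP/cards0_eq J0; subst J.
  by rewrite subset0 (introF eqP neqIJ).
- case: eqP => // _; case: ifP => // _; congr (- _); apply: eq_bigr => L.
  by case/and3P=> _ _ /proper_card ltLJ; apply: IHk; lia.
Qed.

Lemma mobius_eq0 I J : ~~ (I \subset J) -> mobius I J = 0.
Proof.
move=> nsIJ; have neqIJ : I != J by apply: contra nsIJ => /eqP ->.
by rewrite /mobius; case: #|J| => [|k] /=; rewrite (negbTE neqIJ) ?(negbTE nsIJ).
Qed.

Lemma mobiusxx I : mobius I I = 1.
Proof. by rewrite /mobius; case: #|I| => [|k] /=; rewrite eqxx. Qed.

Lemma mobius_proper I J : I \proper J ->
  mobius I J = - \sum_(L | [&& is_interval L, I \subset L & L \proper J]) mobius I L.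
Proof.
move=> pIJ; have ltIJ := proper_card pIJ.
have neqIJ : I != J by apply: contraTN pIJ => /eqP ->; rewrite properxx.
rewrite /mobius; case EJ: #|J| => [|k]; first by rewrite EJ in ltIJ.
rewrite /= (negbTE neqIJ) (proper_sub pIJ); congr (- _); apply: eq_bigr => L.
by case/and3P=> _ _ /proper_card; rewrite EJ ltnS => leLk; apply: mob_aux_fuel.
Qed.

Definition zeta I J : int := ((I \subset J) : nat)%:Z.

Lemma mobius_zeta I J : is_interval I -> is_interval J ->
  \sum_(L | is_interval L) mobius I L * zeta L J = (I == J)%:R.
Proof.
move=> intI intJ.
have -> : \sum_(L | is_interval L) mobius I L * zeta L J =
          \sum_(L | [&& is_interval L, I \subset L & L \subset J]) mobius I L.
  rewrite big_mkcond [RHS]big_mkcond; apply: eq_bigr => L _.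
  rewrite /zeta; case: (is_interval L) => //=.
  have [sIL|nsIL] /= := boolP (I \subset L); last by rewrite mobius_eq0 ?mul0r.
  by case: (L \subset J); rewrite ?mulr1 ?mulr0.
have [<-|neqIJ] := eqVneq I J.
  rewrite (bigD1 I) /=; last by rewrite intI !subxx.
  rewrite mobiusxx big1 ?addr0 // => L /andP[/and3P[_ sIL sLI] neqLI].
  by case/negP: neqLI; rewrite eqEsubset sLI sIL.
have [sIJ|nsIJ] := boolP (I \subset J); last first.
  by rewrite big1 // => L /and3P[_ sIL sLJ]; case/negP: nsIJ; apply: subset_trans sLJ.
have pIJ : I \proper J by rewrite properEneq neqIJ.
rewrite (bigD1 J) /=; last by rewrite intJ sIJ subxx.
rewrite (mobius_proper pIJ) addrC; apply/eqP; rewrite subr_eq0; apply/eqP.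
apply: eq_bigl => L; rewrite properEneq.
by case: (is_interval L) (I \subset L) (L \subset J) (L != J) => [] [] [] [].
Qed.

(* A one-sided inverse of a square matrix is two-sided, so the left-inverse
   identity above also gives the right one. *)
Lemma zeta_mobius I J : is_interval I -> is_interval J ->
  \sum_(L | is_interval L) zeta I L * mobius L J = (I == J)%:R.
Proof.
move=> intI intJ.
pose A := [pred L : {set gvert m n} | is_interval L].
pose mx (F : {set gvert m n} -> {set gvert m n} -> int) : 'M[int]_#|A| :=
  \matrix_(i, j) F (enum_val i) (enum_val j).
have sum_enum (G : {set gvert m n} -> int) :
    \sum_(L | is_interval L) G L = \sum_(k < #|A|) G (enum_val k).
  by rewrite -big_enum_val.
have mobius_zeta_mx : mx (@mobius m n) *m mx zeta = 1%:M.
  apply/matrixP => i j; rewrite !mxE -(inj_eq enum_val_inj).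
  rewrite -(mobius_zeta (enum_valP i) (enum_valP j)) sum_enum.
  by apply: eq_bigr => k _; rewrite !mxE.
move/matrixP/(_ (enum_rank_in intI I) (enum_rank_in intJ J)): (mulmx1C mobius_zeta_mx).
rewrite !mxE -(inj_eq enum_val_inj) !enum_rankK_in ?inE // => <-.
by rewrite sum_enum; apply: eq_bigr => k _; rewrite !mxE !enum_rankK_in ?inE.
Qed.

Lemma mobius_inversion (f : {set gvert m n} -> int) S : is_interval S ->
  \sum_(I | is_interval I)
     zeta S I * \sum_(J | is_interval J && (I \subset J)) mobius I J * f J = f S.
Proof.
move=> intS.
have restrict_sum I : \sum_(J | is_interval J && (I \subset J)) mobius I J * f J
                      = \sum_(J | is_interval J) mobius I J * f J.
  rewrite [RHS](bigID (fun J => I \subset J)) /= [X in _ + X]big1 ?addr0 //.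
  by move=> J /andP[_ nsIJ]; rewrite mobius_eq0 ?mul0r.
under eq_bigr => I _ do rewrite restrict_sum mulr_sumr.
rewrite exchange_big /= (eq_bigr (fun J => (S == J)%:R * f J)) => [|J intJ]; last first.
  by rewrite -(zeta_mobius intS intJ) mulr_suml; apply: eq_bigr => I _; rewrite mulrA.
rewrite (bigD1 S) //= eqxx mul1r big1 ?addr0 // => J /andP[_ neqJS].
by rewrite eq_sym (negbTE neqJS) mul0r.
Qed.

End IntervalMobius.

Section SingletonInterval.

Variables m n : nat.

Lemma gle_anti (x y : gvert m n) : gle x y -> gle y x -> x = y.
Proof.
case: x y => [a b] [c d]; rewrite /gle /= => /andP[leac lebd] /andP[leca ledb].
by congr pair; apply/val_inj/eqP; rewrite eqn_leq ?leac ?lebd ?leca ?ledb.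
Qed.

Lemma interval_set1 (v : gvert m n) : is_interval [set v].
Proof.
apply/and3P; split.
- by apply/set0Pn; exists v; rewrite set11.
- by apply/forall_inP => x /set1P ->; apply/forall_inP => y /set1P ->; apply: connect0.
- apply/forall_inP => x /set1P ->; apply/forall_inP => y /set1P ->.
  by apply/forallP => z; apply/implyP => /andP[lexz lezx]; rewrite (gle_anti lezx lexz) set11.
Qed.

Lemma garr_irr (x : gvert m n) : garr x x = false.
Proof. by apply/negP; rewrite /garr => /orP[] /andP[_ /eqP]; lia. Qed.

Lemma ess_vert_set1 e (v : gvert m n) : ess_vert e [set v] = [set v].
Proof.
have ss_set1 : ss_vert [set v] = [set v].
  apply/setP => x; rewrite /ss_vert !inE; case: eqP => //= ->.
  apply/orP; left; apply/forallP => y; apply/implyP => garr_yv.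
  by rewrite in_set1; apply: contraTN garr_yv => /eqP ->; rewrite garr_irr.
case: e => //=; apply/setP => x; rewrite /cc_vert !inE; case: eqP => //= ->.
by rewrite ss_set1; apply/andP; split; apply/exists_inP; exists v; rewrite ?inE.
Qed.

End SingletonInterval.

Lemma ord_le1_eq d (a b : 'I_d) : (d <= 1)%N -> a = b.
Proof. by move=> led1; apply/ord_inj; move: (ltn_ord a) (ltn_ord b) led1; lia. Qed.

Lemma pboolP (P : Prop) : reflect P (pbool P).
Proof. by rewrite /pbool; case: excluded_middle_informative => hP; constructor. Qed.

Section SingletonMultiplicity.

Variables (K : fieldType) (m n : nat) (M : rep K m n) (v : gvert m n).

Lemma VI_map_set1 : VI_map K [set v] v v = 1%:M.
Proof.
apply/matrixP => a b; rewrite /VI_map /gle !leqnn /= !mxE.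
by rewrite (ord_le1_eq a b (leq_b1 _)) eqxx.
Qed.

Lemma summand_pow_set1_le k :
  summand_pow [set v] (VI_map K [set v]) (rmap M) k -> (k <= rdim M v)%N.
Proof.
case=> f [g [_ _ fg_delta]].
have lt0 : (0 < VI_dim [set v] v)%N by rewrite /VI_dim set11.
pose a0 := Ordinal lt0.
pose F : 'M[K]_(k, rdim M v) := \matrix_(i, b) f i v a0 b.
pose G : 'M[K]_(rdim M v, k) := \matrix_(b, j) g j v b a0.
have FG : F *m G = 1%:M.
  apply/matrixP => i j; move/matrixP/(_ a0 a0): (fg_delta i j v (set11 v)).
  have -> : (if i == j then 1%:M else 0 : 'M[K]_(VI_dim [set v] v)) a0 a0 = (i == j)%:R.
    by case: (i == j); rewrite !mxE ?eqxx.
  by rewrite !mxE => <-; apply: eq_bigr => b _; rewrite !mxE.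
by rewrite -(mxrank1 K k) -FG (leq_trans (mxrankM_maxl F G)) ?rank_leq_col.
Qed.

(* The coordinate vectors of K^(dim M v) split off dim M v copies of K. *)
Lemma summand_pow_set1_rdim :
  summand_pow [set v] (VI_map K [set v]) (rmap M) (rdim M v).
Proof.
exists (fun (i : 'I_(rdim M v)) x => \matrix_(a, b) ((b : nat) == i)%:R).
exists (fun (i : 'I_(rdim M v)) x => \matrix_(b, a) ((b : nat) == i)%:R).
split=> [i x y /set1P -> /set1P -> _|i x y /set1P -> /set1P -> _|i j x /set1P ->].
- by rewrite VI_map_set1 rmap_id mul1mx mulmx1.
- by rewrite VI_map_set1 rmap_id mul1mx mulmx1.
apply/matrixP => a a'.
rewrite (ord_le1_eq a a' (leq_b1 _)) mxE (bigD1 i) //= !mxE eqxx mul1r big1 ?addr0.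
  by case: (eqVneq i j) => [->|/negbTE neqij]; rewrite !mxE ?eqxx // -[_ == _]/(i == j) neqij.
by move=> b /negbTE neqbi; rewrite !mxE -[(b : nat) == i]/(b == i) neqbi mul0r.
Qed.

Lemma dbar_set1 e : dbar e M [set v] = rdim M v.
Proof.
rewrite /dbar /mult_summand ess_vert_set1; apply/eqP; rewrite eqn_leq; apply/andP; split.
  by apply/bigmax_leqP => k /pboolP /summand_pow_set1_le.
have ltv : (rdim M v < (\sum_x rdim M x).+1)%N by rewrite ltnS (bigD1 v) //= leq_addr.
apply: (@leq_bigmax_cond _ _ (fun k : 'I_ _ => nat_of_ord k) (Ordinal ltv)).
exact/pboolP/summand_pow_set1_rdim.
Qed.

End SingletonMultiplicity.

Theorem mainTheorem16 (K : fieldType) (m n : nat) (hm : (0 < m)%N) (hn : (0 < n)%N)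
  (M : rep K m n) (e : ess_kind) :
  forall v : gvert m n,
    \sum_(I : {set gvert m n} | is_interval I) dtilde e M I * (VI_dim I v)%:Z
    = (rdim M v)%:Z.
Proof.
move=> v.
have := mobius_inversion (fun J => (dbar e M J)%:Z) (interval_set1 v).
rewrite dbar_set1 => <-.
by apply: eq_bigr => I _; rewrite mulrC /zeta sub1set.
Qed.
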